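(* Let $M\in\mathbb{R}^{(\ell+1)\times(\ell+1)}$ have all entries nonnegative, $\lambda\in\mathbb{R}$, and $x\in\mathbb{R}^{\ell+1}$ with all entries strictly positive, such that $Mx=\lambda x$. Let $\overline{L}:=\lambda I_\ell-\overline{M}$. (i) Then $\lambda\ge0$ and $\overline{M}\,\overline{x}\le\lambda\overline{x}$ entrywise; consequently $\overline{L}\,\overline{x}\ge0$. (ii) If moreover the last column of $M$ has all entries strictly positive, then $\overline{M}\,\overline{x}<\lambda\overline{x}$ entrywise, and consequently $\overline{L}$ is a nonsingular $M$-matrix. (iii) Let $t$ be a positive integer and $\overline{y}:=\sum_{k=0}^{t-1}\overline{M}^k\overline{x}$. Then $\overline{y}$ has all entries strictly positive. If moreover the last column of $\sum_{k=0}^{t-1}M^k$ has all entries strictly positive, then $\overline{M}\,\overline{y}<\lambda\overline{y}$ entrywise, and consequently $\overline{L}$ is a nonsingular $M$-matrix.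
   Context: For $x\in\mathbb{R}^{\ell+1}$, $\overline{x}\in\mathbb{R}^\ell$ denotes $x$ with its last coordinate removed; for $M\in\mathbb{R}^{(\ell+1)\times(\ell+1)}$, $\overline{M}\in\mathbb{R}^{\ell\times\ell}$ denotes $M$ with its last row and last column removed. Inequalities $u\le v$ (resp. $u<v$) between vectors are entrywise. A matrix $Q\in\mathbb{R}^{\ell\times\ell}$ with nonpositive off-diagonal entries is a nonsingular $M$-matrix if it is invertible and $Q^{-1}$ has all entries nonnegative. *)

From HB Require Import structures.
From mathcomp Require Import all_boot all_order all_algebra.
Set Implicit Arguments. Unset Strict Implicit. Unset Printing Implicit Defensive.
Import Order.TTheory GRing.Theory Num.Theory.
Local Open Scope ring_scope.

Definition trunc_mx (R : Type) (l : nat) (M : 'M[R]_l.+1) : 'M[R]_l :=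
  \matrix_(i < l, j < l) M (widen_ord (leqnSn l) i) (widen_ord (leqnSn l) j).

Definition trunc_cv (R : Type) (l : nat) (x : 'cV[R]_l.+1) : 'cV[R]_l :=
  \col_(i < l) x (widen_ord (leqnSn l) i) 0.

Definition mx_le (R : numDomainType) (m n : nat) (A B : 'M[R]_(m, n)) : Prop :=
  forall i j, A i j <= B i j.
Definition mx_lt (R : numDomainType) (m n : nat) (A B : 'M[R]_(m, n)) : Prop :=
  forall i j, A i j < B i j.

Definition nonsingular_M_matrix (R : numFieldType) (n : nat) (Q : 'M[R]_n) : Prop :=
  [/\ forall i j, i != j -> Q i j <= 0,
      Q \in unitmx &
      forall i j, 0 <= invmx Q i j].

(* Removing the last coordinate from M x = lambda x gives
   lambda xb - Mb xb = x_last c, where c is the truncated last column of M.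
   Since lambda - Mb commutes with Mb, also lambda yb - Mb yb = x_last (sum_k Mb^k c),
   and by the first-passage decomposition of walks ending at the last index,
   (sum_k Mb^k c)_i > 0 as soon as some walk of length < t of M goes from i to
   the last index.  Finally a Z-matrix Q with Q v > 0 for some v > 0 is a
   nonsingular M-matrix by the minimum principle: if Q u >= 0, the smallest
   ratio u_i / v_i cannot be negative. *)
From HB Require Import structures.
From mathcomp Require Import all_boot all_order all_algebra.
From mathcomp Require Import lra.
Set Implicit Arguments. Unset Strict Implicit. Unset Printing Implicit Defensive.
Import Order.TTheory GRing.Theory Num.Theory.
Local Open Scope ring_scope.

Definition Zmatrix (R : numDomainType) (n : nat) (Q : 'M[R]_n) : Prop :=
  forall i j, i != j -> Q i j <= 0.

Section ZMatrix.

Variables (R : realFieldType) (n : nat) (Q : 'M[R]_n) (v : 'cV[R]_n).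
Hypotheses (ZQ : Zmatrix Q) (v_gt0 : forall i, 0 < v i 0)
  (Qv_gt0 : forall i, 0 < (Q *m v) i 0).

Lemma Zmatrix_mulmx_ge0 (u : 'cV[R]_n) :
  (forall i, 0 <= (Q *m u) i 0) -> forall i, 0 <= u i 0.
Proof.
move=> Qu_ge0 k; rewrite leNgt; apply/negP => uk_lt0.
pose ratio j := u j 0 / v j 0.
have [i _ ratio_min] := Order.TotalTheory.arg_minP ratio (i0 := k) (P := predT) isT.
set mu := ratio i in ratio_min.
have mu_lt0 : mu < 0.
  apply: le_lt_trans (ratio_min k isT) _.
  by rewrite /ratio pmulr_llt0 ?invr_gt0.
pose w := u - mu *: v.
have w_ge0 j : 0 <= w j 0.
  rewrite !mxE subr_ge0 -ler_pdivlMr //; exact: ratio_min.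
have wi0 : w i 0 = 0.
  by rewrite !mxE /mu /ratio mulrC mulrCA divff ?mulr1 ?subrr // lt0r_neq0.
have Qwi_gt0 : 0 < (Q *m w) i 0.
  have -> : (Q *m w) i 0 = (Q *m u) i 0 - mu * (Q *m v) i 0.
    by rewrite mulmxBr -scalemxAr !mxE.
  by have := Qu_ge0 i; have := Qv_gt0 i; nra.
have Qwi_le0 : (Q *m w) i 0 <= 0.
  rewrite mxE; apply: sumr_le0 => j _.
  have [->|ji] := eqVneq j i; first by rewrite wi0 mulr0.
  by rewrite mulr_le0_ge0 // ZQ // eq_sym.
by have := lt_le_trans Qwi_gt0 Qwi_le0; rewrite ltxx.
Qed.

Lemma Zmatrix_mulmx_eq0 (u : 'cV[R]_n) : Q *m u = 0 -> u = 0.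
Proof.
move=> Qu0; apply/colP => i; apply/eqP; rewrite mxE eq_le.
have /(_ i) -> : forall j, 0 <= u j 0.
  by apply: Zmatrix_mulmx_ge0 => j; rewrite Qu0 mxE.
have /(_ i) : forall j, 0 <= (- u) j 0.
  by apply: Zmatrix_mulmx_ge0 => j; rewrite mulmxN Qu0 oppr0 mxE.
by rewrite mxE oppr_ge0 andbT.
Qed.

Lemma Zmatrix_unitmx : Q \in unitmx.
Proof.
rewrite -row_full_unit -cokermx_eq0; apply/eqP/matrixP => i j.
have colK0 : Q *m col j (cokermx Q) = 0 by rewrite colE mulmxA mulmx_coker mul0mx.
by move/colP: (Zmatrix_mulmx_eq0 colK0) => /(_ i); rewrite !mxE.
Qed.

Lemma Zmatrix_nonsingular_M_matrix : nonsingular_M_matrix Q.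
Proof.
split=> // [|i j]; first exact: Zmatrix_unitmx.
have := @Zmatrix_mulmx_ge0 (invmx Q *m delta_mx j 0).
rewrite mulmxA mulmxV ?Zmatrix_unitmx // mul1mx -colE => /(_ _ i).
by rewrite mxE; apply=> k; rewrite mxE ler0n.
Qed.

End ZMatrix.

Section EntrywiseOrder.

Variables (R : numDomainType) (m n : nat).
Implicit Types A B : 'M[R]_(m, n).

Lemma mx_subr_ge0 A B : mx_le 0 (B - A) <-> mx_le A B.
Proof. by split=> AB i j; move: (AB i j); rewrite !mxE subr_ge0. Qed.

Lemma mx_subr_gt0 A B : mx_lt 0 (B - A) <-> mx_lt A B.
Proof. by split=> AB i j; move: (AB i j); rewrite !mxE subr_gt0. Qed.

End EntrywiseOrder.

Lemma scalar_sub_nonsingular_M_matrix (R : realFieldType) (n : nat)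
    (A : 'M[R]_n) (a : R) (y : 'cV[R]_n) :
  (forall i j, 0 <= A i j) -> (forall i, 0 < y i 0) ->
  mx_lt (A *m y) (a *: y) -> nonsingular_M_matrix (a%:M - A).
Proof.
move=> A_ge0 y_gt0 Ay_lt; apply: (Zmatrix_nonsingular_M_matrix (v := y)) => //.
- by move=> i j ij; rewrite !mxE (negbTE ij) mulr0n sub0r oppr_le0.
- move/mx_subr_gt0: Ay_lt => Ay_lt i; move: (Ay_lt i 0).
  by rewrite mulmxBl mul_scalar_mx mxE.
Qed.

Lemma mulmx_ge0 (R : numDomainType) (m n p : nat)
    (A : 'M[R]_(m, n)) (B : 'M[R]_(n, p)) :
  (forall i j, 0 <= A i j) -> (forall i j, 0 <= B i j) ->
  forall i j, 0 <= (A *m B) i j.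
Proof. by move=> A_ge0 B_ge0 i j; rewrite mxE sumr_ge0 // => k _; rewrite mulr_ge0. Qed.

Lemma exprmx_ge0 (R : numDomainType) (n : nat) (A : 'M[R]_n) :
  (forall i j, 0 <= A i j) -> forall k i j, 0 <= (A ^+ k) i j.
Proof.
move=> A_ge0; elim=> [|k IHk] i j; first by rewrite expr0 mxE ler0n.
by rewrite exprS -mulmxE mulmx_ge0.
Qed.

Lemma sum_exprmx_mulmx_gt0 (R : numDomainType) (n t : nat)
    (A : 'M[R]_n) (v : 'cV[R]_n) :
  (forall i j, 0 <= A i j) -> (forall i, 0 < v i 0) -> (0 < t)%N ->
  forall i, 0 < (\sum_(k < t) A ^+ k *m v) i 0.
Proof.
move=> A_ge0 v_gt0; case: t => // t _ i.
rewrite big_ord_recl expr0 mul1mx mxE (lt_le_trans (v_gt0 i)) // lerDl summxE.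
apply: sumr_ge0 => k _; apply: mulmx_ge0 => [|j o]; first exact: exprmx_ge0.
by rewrite (ord1 o) ltW.
Qed.

Lemma sum_exprmx_mulmx_scalar_sub (R : comPzRingType) (n t : nat)
    (A : 'M[R]_n) (a : R) (u : 'cV[R]_n) :
  let y := \sum_(k < t) A ^+ k *m u in
  a *: y - A *m y = \sum_(k < t) A ^+ k *m (a *: u - A *m u).
Proof.
rewrite /= mulmx_sumr scaler_sumr -sumrB; apply: eq_bigr => k _.
have AXC : A *m A ^+ k = A ^+ k *m A by rewrite mulmxE -exprS exprSr.
by rewrite mulmxBr -scalemxAr !mulmxA AXC.
Qed.

Definition trunc_last_col (R : Type) (l : nat) (M : 'M[R]_l.+1) : 'cV[R]_l :=
  trunc_cv (col ord_max M).

Section Truncation.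

Variables (R : comPzRingType) (l : nat) (M : 'M[R]_l.+1).
Local Notation Mb := (trunc_mx M).
Local Notation c := (trunc_last_col M).

Lemma trunc_cvZ (a : R) (x : 'cV[R]_l.+1) : trunc_cv (a *: x) = a *: trunc_cv x.
Proof. by apply/colP => i; rewrite !mxE. Qed.

Lemma trunc_cv_mulmx (v : 'cV[R]_l.+1) :
  trunc_cv (M *m v) = Mb *m trunc_cv v + v ord_max 0 *: c.
Proof.
apply/colP => i; rewrite !mxE big_ord_recr /= mulrC; congr (_ + _).
by apply: eq_bigr => j _; rewrite !mxE.
Qed.

Lemma trunc_eigen (lambda : R) (x : 'cV[R]_l.+1) :
  M *m x = lambda *: x ->
  lambda *: trunc_cv x - Mb *m trunc_cv x = x ord_max 0 *: c.
Proof. by move=> Mx; rewrite -trunc_cvZ -Mx trunc_cv_mulmx addrC addKr. Qed.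

(* First-passage decomposition: a walk of length k+1 from i <= l to the last
   index stays among the first l indices for m steps, then enters the last index
   and returns to it in the remaining k - m steps. *)
Lemma trunc_last_colX (k : nat) :
  trunc_last_col (M ^+ k.+1) =
  \sum_(m < k.+1) (M ^+ (k - m)) ord_max ord_max *: (Mb ^+ m *m c).
Proof.
elim: k => [|k IHk].
  by rewrite big_ord1 expr1 subnn expr0 mul1mx mxE eqxx scale1r.
rewrite big_ord_recl subn0 expr0 mul1mx addrC.
under eq_bigr do rewrite subSS exprS -mulmxE -mulmxA scalemxAr.
rewrite -mulmx_sumr -IHk exprS -mulmxE.
by rewrite /trunc_last_col [col _ (_ *m _)]colE -mulmxA -colE trunc_cv_mulmx mxE.
Qed.

End Truncation.

Lemma sum_exprmx_trunc_last_col_gt0 (R : realFieldType) (l t : nat)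
    (M : 'M[R]_l.+1) (i : 'I_l) :
  (forall i j, 0 <= M i j) ->
  0 < (\sum_(k < t) M ^+ k) (widen_ord (leqnSn l) i) ord_max ->
  0 < (\sum_(k < t) trunc_mx M ^+ k *m trunc_last_col M) i 0.
Proof.
move=> M_ge0; apply: contraTT; rewrite -!leNgt summxE => walks_le0.
have Mb_ge0 : forall i j, 0 <= trunc_mx M i j by move=> ? ?; rewrite mxE.
have c_ge0 : forall i j, 0 <= trunc_last_col M i j by move=> ? ?; rewrite !mxE.
have term_ge0 (k : 'I_t) : 0 <= (trunc_mx M ^+ k *m trunc_last_col M) i 0.
  exact: mulmx_ge0 (exprmx_ge0 Mb_ge0 k) c_ge0 i 0.
have sum0 : \sum_(k < t) (trunc_mx M ^+ k *m trunc_last_col M) i 0 = 0.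
  by apply/eqP; rewrite eq_le walks_le0 sumr_ge0.
have term0 k : (k < t)%N -> (trunc_mx M ^+ k *m trunc_last_col M) i 0 = 0.
  by move=> kt; apply: (@psumr_eq0P _ _ _ _ (fun k _ => term_ge0 k) sum0 (Ordinal kt)).
rewrite summxE; apply: sumr_le0 => -[[|k] kt] _ /=.
  by rewrite expr0 mxE -val_eqE /= ltn_eqF.
have -> : (M ^+ k.+1) (widen_ord (leqnSn l) i) ord_max =
          trunc_last_col (M ^+ k.+1) i 0 by rewrite !mxE.
rewrite trunc_last_colX summxE; apply: sumr_le0 => m _.
by rewrite mxE term0 ?mulr0 // (ltn_trans (ltn_ord m)).
Qed.

Lemma eigenvalue_ge0 (R : realFieldType) (n : nat) (M : 'M[R]_n.+1)
    (lambda : R) (x : 'cV[R]_n.+1) :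
  (forall i j, 0 <= M i j) -> (forall i, 0 < x i 0) ->
  M *m x = lambda *: x -> 0 <= lambda.
Proof.
move=> M_ge0 x_gt0 /colP /(_ ord0); rewrite !mxE => Mx0.
rewrite -(pmulr_lge0 _ (x_gt0 ord0)) -Mx0 sumr_ge0 // => j _.
by rewrite mulr_ge0 // ltW.
Qed.

Theorem proposition6p7 (R : realFieldType) (l : nat)
    (M : 'M[R]_l.+1) (lambda : R) (x : 'cV[R]_l.+1) :
  (forall i j, 0 <= M i j) ->
  (forall i, 0 < x i 0) ->
  M *m x = lambda *: x ->
  let Mb := trunc_mx M in
  let xb := trunc_cv x in
  let Lb := lambda%:M - Mb in
  (* (i) *)
  [/\ 0 <= lambda, mx_le (Mb *m xb) (lambda *: xb) & mx_le 0 (Lb *m xb)]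
  /\
  (* (ii) *)
  ((forall i, 0 < M i ord_max) ->
     mx_lt (Mb *m xb) (lambda *: xb) /\ nonsingular_M_matrix Lb)
  /\
  (* (iii) *)
  (forall t : nat, (0 < t)%N ->
     let yb := \sum_(k < t) (Mb ^+ k *m xb) in
     (forall i, 0 < yb i 0) /\
     ((forall i, 0 < (\sum_(k < t) M ^+ k) i ord_max) ->
        mx_lt (Mb *m yb) (lambda *: yb) /\ nonsingular_M_matrix Lb)).
Proof.
move=> M_ge0 x_gt0 Mx Mb xb Lb.
have Mb_ge0 : forall i j, 0 <= Mb i j by move=> i j; rewrite mxE.
have xb_gt0 : forall i, 0 < xb i 0 by move=> i; rewrite mxE.
have gap := trunc_eigen Mx; rewrite -/Mb -/xb in gap.
have gap_ge0 : mx_le 0 (lambda *: xb - Mb *m xb).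
  by rewrite gap => i j; rewrite !mxE mulr_ge0 // ltW.
split; [|split].
- split; [exact: eigenvalue_ge0 Mx|exact/mx_subr_ge0|].
  by rewrite mulmxBl mul_scalar_mx.
- move=> lastcol_gt0.
  have Mbxb_lt : mx_lt (Mb *m xb) (lambda *: xb).
    by apply/mx_subr_gt0; rewrite gap => i j; rewrite !mxE mulr_gt0.
  by split=> //; apply: scalar_sub_nonsingular_M_matrix Mbxb_lt.
- move=> t t_gt0 yb; split=> [|walks_gt0]; first exact: sum_exprmx_mulmx_gt0.
  have Mbyb_lt : mx_lt (Mb *m yb) (lambda *: yb).
    apply/mx_subr_gt0; rewrite sum_exprmx_mulmx_scalar_sub gap => i j.
    under eq_bigr do rewrite -scalemxAr.
    by rewrite -scaler_sumr (ord1 j) !mxE mulr_gt0 ?sum_exprmx_trunc_last_col_gt0.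
  split=> //; apply: scalar_sub_nonsingular_M_matrix Mbyb_lt => //.
  exact: sum_exprmx_mulmx_gt0.
Qed.
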